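(* Let $(X,<)$ be a linearly ordered set and $u,v\in\beta X$. Then $$\widetilde{\min}(u,v)=u\iff\widetilde{\max}(u,v)=v\iff \mathrm{supp}(u)<\mathrm{supp}(v)\ \vee\ \mathrm{supp}(u)=\mathrm{supp}(v)=I_u=I_v\ \vee\ u=v,$$ $$\widetilde{\min}(u,v)=v\iff\widetilde{\max}(u,v)=u\iff \mathrm{supp}(v)<\mathrm{supp}(u)\ \vee\ \mathrm{supp}(u)=\mathrm{supp}(v)=J_u=J_v\ \vee\ u=v.$$
   Context: $\beta X$ is the set of ultrafilters over $X$; $\tilde x=\{S\subseteq X:x\in S\}$. For a binary operation $F$ on $X$ (here $\min,\max$), $S\in\tilde F(u,v)\iff\{x\in X:\{y\in X:F(x,y)\in S\}\in v\}\in u$ for all $S\subseteq X$. $I_u=\bigcap\{I\in u: I\text{ initial segment of }X\}$, $J_u=\bigcap\{J\in u: J\text{ final segment of }X\}$; for non-principal $u$ exactly one of $I_u\in u$, $J_u\in u$ holds. Supports: $\mathrm{supp}(\tilde x)=\{x\}$; for non-principal $u$, $\mathrm{supp}(u)$ is $I_u$ regarded as a left half-cut if $I_u\in u$, and $J_u$ regarded as a right half-cut if $J_u\in u$; supports are equal iff of the same kind and equal as sets. ''$\mathrm{supp}(u)=\mathrm{supp}(v)=I_u=I_v$'' means $u,v$ non-principal, $I_u\in u$, $I_v\in v$, $I_u=I_v$; similarly for $J$. Order on supports: $\{x\}<\{y\}$ iff $x<y$; $\{x\}<I$ iff $x\in I$, $I<\{x\}$ iff $x\notin I$; $\{x\}<J$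 iff $x\notin J$, $J<\{x\}$ iff $x\in J$; $I<I'$ iff $I\subsetneq I'$; $J<J'$ iff $J\supsetneq J'$; $I<J$ iff $I\cap J=\emptyset$, $J<I$ iff $I\cap J\ne\emptyset$. *)

From HB Require Import structures.
From mathcomp Require Import all_boot all_order.
From Stdlib Require Import ClassicalEpsilon.
Set Implicit Arguments. Unset Strict Implicit. Unset Printing Implicit Defensive.
Import Order.TTheory.
Local Open Scope order_scope.

Section Ultra.
Context {d : Order.disp_t} {X : orderType d}.

Definition pset := X -> Prop.
Definition ufam := pset -> Prop.

Definition is_ultrafilter (u : ufam) : Prop :=
  u (fun _ => True) /\
  ~ u (fun _ => False) /\
  (forall A B : pset, u A -> (forall x, A x -> B x) -> u B) /\
  (forall A B : pset, u A -> u B -> u (fun x => A x /\ B x)) /\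
  (forall A : pset, u A \/ u (fun x => ~ A x)).

Definition principal (x : X) : ufam := fun S => S x.

Definition nonprincipal (u : ufam) : Prop := ~ exists x, u = principal x.

Definition ext2 (F : X -> X -> X) (u v : ufam) : ufam :=
  fun S => u (fun x => v (fun y => S (F x y))).

Definition tmin (u v : ufam) : ufam := ext2 (fun x y => Order.min x y) u v.
Definition tmax (u v : ufam) : ufam := ext2 (fun x y => Order.max x y) u v.

Definition initial_seg (L : pset) : Prop := forall x y, L y -> x <= y -> L x.
Definition final_seg (J : pset) : Prop := forall x y, J x -> x <= y -> J y.

Definition I_u (u : ufam) : pset := fun x => forall L, initial_seg L -> u L -> L x.
Definition J_u (u : ufam) : pset := fun x => forall J, final_seg J -> u J -> J x.

(* supports: a point, a left half-cut (given by an initial segment),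
   or a right half-cut (given by a final segment) *)
Inductive support : Type :=
| SPoint of X
| SLeft of pset
| SRight of pset.

(* supp(~x) = {x}; for non-principal u, supp u = I_u (left) if I_u \in u,
   and J_u (right) otherwise (then J_u \in u). *)
Definition supp (u : ufam) : support :=
  match excluded_middle_informative (exists x, u = principal x) with
  | left H => SPoint (proj1_sig (constructive_indefinite_description _ H))
  | right _ =>
      if excluded_middle_informative (u (I_u u)) then SLeft (I_u u)
      else SRight (J_u u)
  end.

Definition supp_eq (s t : support) : Prop :=
  match s, t with
  | SPoint x, SPoint y => x = y
  | SLeft L, SLeft L' => forall z, L z <-> L' z
  | SRight J, SRight J' => forall z, J z <-> J' z
  | _, _ => False
  end.

Definition supp_lt (s t : support) : Prop :=
  match s, t with
  | SPoint x, SPoint y => x < y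
  | SPoint x, SLeft L => L x
  | SLeft L, SPoint x => ~ L x
  | SPoint x, SRight J => ~ J x
  | SRight J, SPoint x => J x
  | SLeft L, SLeft L' => (forall z, L z -> L' z) /\ exists z, L' z /\ ~ L z
  | SRight J, SRight J' => (forall z, J' z -> J z) /\ exists z, J z /\ ~ J' z
  | SLeft L, SRight J => forall z, ~ (L z /\ J z)
  | SRight J, SLeft L => exists z, L z /\ J z
  end.

(* "supp(u) = supp(v) = I_u = I_v" *)
Definition same_left_supp (u v : ufam) : Prop :=
  nonprincipal u /\ nonprincipal v /\ u (I_u u) /\ v (I_u v) /\
  (forall z, I_u u z <-> I_u v z).

(* "supp(u) = supp(v) = J_u = J_v" *)
Definition same_right_supp (u v : ufam) : Prop :=
  nonprincipal u /\ nonprincipal v /\ u (J_u u) /\ v (J_u v) /\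
  (forall z, J_u u z <-> J_u v z).

End Ultra.

(* The proof is organised around the relation  below u v := u (I_u v),
   "u is concentrated on the initial segment I_v", where
   I_v = {z | v([z,+oo))} and dually J_v = {z | v((-oo,z])}.

   1. Extension of operations: if for u-almost every x the map F x . is
      v-almost everywhere equal to x (resp. to the identity), then
      F~(u,v) = u (resp. = v).  For min/max this gives the dichotomy:
      if below u v then min~(u,v) = u and max~(u,v) = v, and otherwise
      min~(u,v) = v and max~(u,v) = u.
   2. Supports: supp u < supp v holds exactly when below u v /\ ~ below v u.
      This is a case analysis on the three kinds of supports, driven by
      explicit descriptions of u(A) for an initial segment A.
   3. below u v /\ below v u means equal left supports (or u = v principal),
      and ~ below u v /\ ~ below v u means equal right supports. *)
From Pilot Require Import Defs.
From HB Require Import structures.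
From mathcomp Require Import all_boot all_order.
From Stdlib Require Import Classical ClassicalEpsilon FunctionalExtensionality PropExtensionality.
Import Order.TTheory.
Local Open Scope order_scope.

Section UltrafilterOrder.
Context {d : Order.disp_t} {X : orderType d}.
Implicit Types (u v w : @ufam d X) (A B C : @pset d X) (x y z : X).

Section OneUltrafilter.
Context {w : @ufam d X} (hw : is_ultrafilter w).

Lemma uf_mono {A B} : w A -> (forall x, A x -> B x) -> w B.
Proof. by case: hw => _ [_ [mono _]]; apply: mono. Qed.

Lemma uf_meet {A B} : w A -> w B -> w (fun x => A x /\ B x).
Proof. by case: hw => _ [_ [_ [meet _]]]; apply: meet. Qed.

Lemma uf_nonempty {A} : w A -> exists x, A x.
Proof.
move=> wA; apply: NNPP => empty; have [_ [w0 _]] := hw; apply: w0.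
by apply: (uf_mono wA) => x Ax; apply: empty; exists x.
Qed.

Lemma uf_compl A : w (fun x => ~ A x) <-> ~ w A.
Proof.
split=> [wnA wA|nwA]; last by case: hw => _ [_ [_ [_ ult]]]; case: (ult A).
by case: (uf_nonempty (uf_meet wA wnA)) => x [].
Qed.

Lemma uf_const (P : Prop) : w (fun _ => P) <-> P.
Proof.
split=> [/uf_nonempty [] //|p].
by case: hw => wT _; apply: (uf_mono wT).
Qed.

Lemma uf_congr {C A B} : w C -> (forall x, C x -> (A x <-> B x)) -> (w A <-> w B).
Proof.
move=> wC AB; split=> wX; apply: (uf_mono (uf_meet wX wC)) => x [].
- by move=> Ax /AB <-.
- by move=> Bx /AB ->.
Qed.

Lemma uf_ae_eq (f : X -> X) c (S : X -> Prop) :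
  w (fun y => f y = c) -> (w (fun y => S (f y)) <-> S c).
Proof.
move=> wfc; split=> [/(uf_meet wfc)/uf_nonempty [y [<-]] //|Sc].
by apply: (uf_mono wfc) => y ->.
Qed.

Lemma I_char z : I_u w z <-> w (fun y => z <= y).
Proof.
split=> [Iz|wz L segL wL]; last first.
  by case: (uf_nonempty (uf_meet wz wL)) => y [zy /segL]; apply.
apply: NNPP => /uf_compl wlt; apply: (Iz _ _ wlt) (lexx z).
by move=> a b nb ab za; apply: nb; apply: le_trans ab.
Qed.

Lemma J_char z : J_u w z <-> w (fun y => y <= z).
Proof.
split=> [Jz|wz L segL wL]; last first.
  by case: (uf_nonempty (uf_meet wz wL)) => y [yz /segL]; apply.
apply: NNPP => /uf_compl wgt; apply: (Jz _ _ wgt) (lexx z).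
by move=> a b na ab bz; apply: na; apply: le_trans bz.
Qed.

Lemma uf_singleton x : w (fun y => y = x) -> w = principal x.
Proof.
move=> wx; apply: functional_extensionality => S.
apply: propositional_extensionality; exact: uf_ae_eq (fun y => y) x S wx.
Qed.

Lemma I_J_principal x : I_u w x -> J_u w x -> w = principal x.
Proof.
move=> /I_char Ix /J_char Jx; apply: uf_singleton.
by apply: (uf_mono (uf_meet Ix Jx)) => y [xy yx]; apply/eqP; rewrite eq_le xy yx.
Qed.

Lemma IJ_cover z : I_u w z \/ J_u w z.
Proof.
rewrite I_char J_char; case: (classic (w (fun y => z <= y))) => [|/uf_compl wgt]; first by left.
by right; apply: (uf_mono wgt) => y /negP; rewrite -ltNge; apply: ltW.
Qed.

Lemma IJ_disjoint z : nonprincipal w -> ~ (I_u w z /\ J_u w z).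
Proof. by move=> np [Iz Jz]; apply: np; exists z; apply: I_J_principal. Qed.

Lemma not_I_lt x : ~ I_u w x -> w (fun y => y < x).
Proof. by rewrite I_char -uf_compl => /uf_mono; apply=> y; rewrite ltNge => /negP. Qed.

Lemma mem_init_left {A} : w (I_u w) -> initial_seg A ->
  (w A <-> forall z, I_u w z -> A z).
Proof. by move=> wI segA; split=> [wA z Iz|]; [apply: Iz | apply: uf_mono]. Qed.

Lemma mem_init_right {A} : w (J_u w) -> initial_seg A ->
  (w A <-> exists z, J_u w z /\ A z).
Proof.
move=> wJ segA; split=> [wA|[z [/J_char wz Az]]]; first exact: uf_nonempty (uf_meet wJ wA).
by apply: (uf_mono wz) => y /segA; apply.
Qed.

End OneUltrafilter.

Lemma principal_uf x : is_ultrafilter (@principal d X x).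
Proof.
rewrite /is_ultrafilter /principal; do !split=> //.
- by move=> A B Ax; apply.
- by move=> A; apply: classic.
Qed.

Lemma principalE x A : principal x A = A x.
Proof. by []. Qed.

Lemma I_principal x z : I_u (principal x) z <-> z <= x.
Proof. exact: I_char (principal_uf x) z. Qed.

Lemma mem_I_principal {w} x : is_ultrafilter w -> (w (I_u (principal x)) <-> J_u w x).
Proof.
move=> hw; rewrite J_char //; apply: (uf_congr hw ((uf_const hw True).2 I)) => y _.
exact: I_principal.
Qed.

Lemma I_initial w : initial_seg (I_u w).
Proof. by move=> x y Iy xy L segL wL; apply: segL (Iy L segL wL) xy. Qed.

Lemma J_final w : final_seg (J_u w).
Proof. by move=> x y Jx xy L segL wL; apply: segL (Jx L segL wL) xy. Qed.

Variant supp_spec w : @Defs.support d X -> Prop :=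
| SuppPoint x of w = principal x : supp_spec w (SPoint x)
| SuppLeft of nonprincipal w & w (I_u w) : supp_spec w (SLeft (I_u w))
| SuppRight of nonprincipal w & w (J_u w) : supp_spec w (SRight (J_u w)).

Lemma suppP {w} : is_ultrafilter w -> supp_spec w (supp w).
Proof.
move=> hw; rewrite /supp; case: excluded_middle_informative => [pr|np].
  by case: constructive_indefinite_description => x /= ->; constructor.
case: excluded_middle_informative => [wI|nwI]; constructor => //.
move/(uf_compl hw): nwI => wnI.
by apply: (uf_mono hw wnI) => z nI; case: (IJ_cover hw z).
Qed.

Definition below u v : Prop := u (I_u v).

Lemma I_sub u v z : below u v -> I_u u z -> I_u v z.
Proof. by move=> uIv Iz; exact: (Iz _ (I_initial v) uIv). Qed.

Lemma J_sub u v z : u (J_u v) -> J_u u z -> J_u v z.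
Proof. by move=> uJv Jz; exact: (Jz _ (J_final v) uJv). Qed.

Lemma ext2_fst (F : X -> X -> X) u v : is_ultrafilter u -> is_ultrafilter v ->
  u (fun x => v (fun y => F x y = x)) -> ext2 F u v = u.
Proof.
move=> hu hv uF; apply: functional_extensionality => S.
apply: propositional_extensionality; apply: (uf_congr hu uF) => x vF.
exact: uf_ae_eq hv (F x) x S vF.
Qed.

Lemma ext2_snd (F : X -> X -> X) u v : is_ultrafilter u -> is_ultrafilter v ->
  u (fun x => v (fun y => F x y = y)) -> ext2 F u v = v.
Proof.
move=> hu hv uF; apply: functional_extensionality => S.
apply: propositional_extensionality; rewrite -(uf_const hu (v S)) /ext2.
by apply: (uf_congr hu uF) => x vF; apply: (uf_congr hv vF) => y ->.
Qed.

Lemma tmin_tmax_below {u v} : is_ultrafilter u -> is_ultrafilter v ->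
  below u v -> tmin u v = u /\ tmax u v = v.
Proof.
move=> hu hv uIv; split; [apply: ext2_fst | apply: ext2_snd] => //;
  apply: (uf_mono hu uIv) => x /(I_char hv) vx; apply: (uf_mono hv vx) => y xy.
- exact: min_l.
- exact: max_r.
Qed.

Lemma tmin_tmax_not_below {u v} : is_ultrafilter u -> is_ultrafilter v ->
  ~ below u v -> tmin u v = v /\ tmax u v = u.
Proof.
move=> hu hv /(uf_compl hu) unIv; split; [apply: ext2_snd | apply: ext2_fst] => //;
  apply: (uf_mono hu unIv) => x /(not_I_lt hv) vx; apply: (uf_mono hv vx) => y /ltW yx.
- exact: min_r.
- exact: max_l.
Qed.

Lemma supp_lt_below {u v} : is_ultrafilter u -> is_ultrafilter v ->
  supp_lt (supp u) (supp v) <-> below u v /\ ~ below v u.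
Proof.
move=> hu hv; rewrite /below.
case: (suppP hu) => [x ->|npu Lu|npu Ru]; case: (suppP hv) => [y ->|npv Lv|npv Rv] /=;
  rewrite ?principalE.
- by rewrite !I_principal; case: ltgtP => _; split=> //; case.
- by rewrite (mem_I_principal x hv); have := IJ_disjoint hv x npv; tauto.
- rewrite (mem_I_principal x hv).
  by have := IJ_disjoint hv x npv; have := IJ_cover hv x; tauto.
- rewrite (mem_I_principal y hu).
  by have := IJ_disjoint hu y npu; have := IJ_cover hu y; tauto.
- rewrite (mem_init_left hu Lu (I_initial v)) (mem_init_left hv Lv (I_initial u)).
  split=> [[sub [z [Iz nIz]]]|[sub nsub]]; split=> //; first by move/(_ z Iz).
  apply: NNPP => none; apply: nsub => z Iz; apply: NNPP => nIz.
  by apply: none; exists z.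
- rewrite (mem_init_left hu Lu (I_initial v)) (mem_init_right hv Rv (I_initial u)).
  split=> [disj|[sub none] z [Iz Jz]]; last by apply: (IJ_disjoint hv z npv); split; [apply: sub|].
  split=> [z Iz|[z [Jz Iz]]]; last exact: (disj z (conj Iz Jz)).
  by case: (IJ_cover hv z) => // Jz; case: (disj z).
- by rewrite (mem_I_principal y hu); have := IJ_disjoint hu y npu; tauto.
- rewrite (mem_init_right hu Ru (I_initial v)) (mem_init_left hv Lv (I_initial u)).
  split=> [[z [Iz Jz]]|[[z [Jz Iz]] _]]; last by exists z.
  split; first by exists z.
  by move=> sub; apply: (IJ_disjoint hu z npu); split; [apply: sub|].
- rewrite (mem_init_right hu Ru (I_initial v)) (mem_init_right hv Rv (I_initial u)).
  split=> [[sub [z [Jz nJz]]]|[[z [Jz Iz]] none]]; split.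
  + by exists z; split=> //; case: (IJ_cover hv z).
  + by move=> [y [Jy Iy]]; apply: (IJ_disjoint hu y npu); split; [|apply: sub].
  + by move=> y Jy; case: (IJ_cover hu y) => // Iy; case: none; exists y.
  + by exists z; split=> // Jz'; apply: (IJ_disjoint hv z npv).
Qed.

Lemma below_both {u v} : is_ultrafilter u -> is_ultrafilter v ->
  below u v -> below v u -> same_left_supp u v \/ u = v.
Proof.
move=> hu hv uv vu; rewrite /below in uv vu.
case: (classic (exists x, u = principal x)) => [[x eu]|npu].
  subst u; right; rewrite principalE in uv; rewrite (mem_I_principal x hv) in vu.
  by rewrite (I_J_principal hv x uv vu).
case: (classic (exists y, v = principal y)) => [[y ev]|npv].
  subst v; right; rewrite principalE in vu; rewrite (mem_I_principal y hu) in uv.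
  exact: (I_J_principal hu y vu uv).
have Iuv z : I_u u z <-> I_u v z by split; apply: I_sub.
left; do !split=> //.
- by apply: (uf_mono hu uv) => z /Iuv.
- by apply: (uf_mono hv vu) => z /Iuv.
Qed.

Lemma same_left_below {u v} : is_ultrafilter u -> same_left_supp u v -> below u v.
Proof. by move=> hu [_ [_ [uI [_ Iuv]]]]; apply: (uf_mono hu uI) => z /Iuv. Qed.

Lemma not_below_J {u v} : is_ultrafilter u -> is_ultrafilter v ->
  ~ below u v -> u (J_u v).
Proof.
move=> hu hv /(uf_compl hu) unI.
by apply: (uf_mono hu unI) => z nIz; case: (IJ_cover hv z).
Qed.

Lemma below_neither {u v} : is_ultrafilter u -> is_ultrafilter v ->
  ~ below u v -> ~ below v u -> same_right_supp u v.
Proof.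
move=> hu hv nuv nvu.
have npu : nonprincipal u.
  move=> [x eu]; subst u; rewrite /below principalE in nuv.
  by rewrite /below (mem_I_principal x hv) in nvu; case: (IJ_cover hv x).
have npv : nonprincipal v.
  move=> [y ev]; subst v; rewrite /below principalE in nvu.
  by rewrite /below (mem_I_principal y hu) in nuv; case: (IJ_cover hu y).
have uJ := not_below_J hu hv nuv; have vJ := not_below_J hv hu nvu.
have Juv z : J_u u z <-> J_u v z by split; apply: J_sub.
do !split=> //.
- by apply: (uf_mono hu uJ) => z /Juv.
- by apply: (uf_mono hv vJ) => z /Juv.
Qed.

Lemma same_right_not_below {u v} : is_ultrafilter u -> is_ultrafilter v ->
  same_right_supp u v -> ~ below u v.
Proof.
move=> hu hv [_ [npv [uJ [_ Juv]]]] uI.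
case: (uf_nonempty hu (uf_meet hu uJ uI)) => z [/Juv Jz Iz].
exact: (IJ_disjoint hv z npv (conj Iz Jz)).
Qed.

Lemma below_supp {u v} : is_ultrafilter u -> is_ultrafilter v ->
  (below u v \/ u = v) <->
  supp_lt (supp u) (supp v) \/ same_left_supp u v \/ u = v.
Proof.
move=> hu hv; rewrite (supp_lt_below hu hv).
have := below_both hu hv; have := same_left_below (v := v) hu.
have := classic (below v u); tauto.
Qed.

Lemma not_below_supp {u v} : is_ultrafilter u -> is_ultrafilter v ->
  (~ below u v \/ u = v) <->
  supp_lt (supp v) (supp u) \/ same_right_supp u v \/ u = v.
Proof.
move=> hu hv; rewrite (supp_lt_below hv hu).
have := below_neither hu hv; have := same_right_not_below hu hv.
have := classic (below v u); tauto.
Qed.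

End UltrafilterOrder.

Theorem corollary4 (d : Order.disp_t) (X : orderType d) (u v : @ufam d X)
  (hu : is_ultrafilter u) (hv : is_ultrafilter v) :
  ((tmin u v = u <-> tmax u v = v) /\
   (tmax u v = v <->
      supp_lt (supp u) (supp v) \/ same_left_supp u v \/ u = v)) /\
  ((tmin u v = v <-> tmax u v = u) /\
   (tmax u v = u <->
      supp_lt (supp v) (supp u) \/ same_right_supp u v \/ u = v)).
Proof.
rewrite -(below_supp hu hv) -(not_below_supp hu hv).
case: (classic (below u v)) => [uv|nuv].
- by have [-> ->] := tmin_tmax_below hu hv uv; intuition congruence.
- by have [-> ->] := tmin_tmax_not_below hu hv nuv; intuition congruence.
Qed.
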